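(* Let $\langle U,B\rangle$ be a 3-frame and consider the Boolean algebra $2^U$ with the operators $\langle B\rangle(X,Y)=\{u\in U\mid\exists x\in X\,\exists y\in Y\,B(x,u,y)\}$ and $[\![B]\!](X,Y)=\{u\in U\mid\forall x\in X\,\forall y\in Y\,B(x,u,y)\}$. Let $\mathcal U_1,\mathcal U_2,\mathcal U_3$ be principal ultrafilters of $2^U$. Then $Q_{\langle B\rangle}(\mathcal U_1,\mathcal U_2,\mathcal U_3)$ implies $S_{[\![B]\!]}(\mathcal U_1,\mathcal U_2,\mathcal U_3)$. In particular, if $U$ is finite, then $Q_{\langle B\rangle}=S_{[\![B]\!]}$.
   Context: A 3-frame is $\langle U,B\rangle$ with $U$ a non-empty set and $B\subseteq U^3$. For binary operators $f,g$ on $2^U$ and ultrafilters $\mathcal U_1,\mathcal U_2,\mathcal U_3$ of $2^U$: $Q_f(\mathcal U_1,\mathcal U_2,\mathcal U_3)\iff f[\mathcal U_1\times\mathcal U_3]\subseteq\mathcal U_2$ and $S_g(\mathcal U_1,\mathcal U_2,\mathcal U_3)\iff g[\mathcal U_1\times\mathcal U_3]\cap\mathcal U_2\neq\emptyset$. A principal ultrafilter of $2^U$ is one of the form $\{X\subseteq U\mid x\in X\}$ for some $x\in U$. *)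

From Stdlib Require Import List.

(* Subsets of U (elements of the Boolean algebra 2^U) are predicates U -> Prop. *)

Definition ultrafilter {U : Type} (F : (U -> Prop) -> Prop) : Prop :=
  F (fun _ => True) /\
  ~ F (fun _ => False) /\
  (forall X Y : U -> Prop, F X -> (forall u, X u -> Y u) -> F Y) /\
  (forall X Y : U -> Prop, F X -> F Y -> F (fun u => X u /\ Y u)) /\
  (forall X : U -> Prop, F X \/ F (fun u => ~ X u)).

Definition is_principal {U : Type} (F : (U -> Prop) -> Prop) : Prop :=
  exists x : U, forall X : U -> Prop, F X <-> X x.

Definition diaB {U : Type} (B : U -> U -> U -> Prop) (X Y : U -> Prop) : U -> Prop :=
  fun u => exists x y, X x /\ Y y /\ B x u y.

Definition boxB {U : Type} (B : U -> U -> U -> Prop) (X Y : U -> Prop) : U -> Prop :=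
  fun u => forall x y, X x -> Y y -> B x u y.

Definition Qrel {U : Type} (f : (U -> Prop) -> (U -> Prop) -> (U -> Prop))
  (U1 U2 U3 : (U -> Prop) -> Prop) : Prop :=
  forall X Y, U1 X -> U3 Y -> U2 (f X Y).

Definition Srel {U : Type} (g : (U -> Prop) -> (U -> Prop) -> (U -> Prop))
  (U1 U2 U3 : (U -> Prop) -> Prop) : Prop :=
  exists X Y, U1 X /\ U3 Y /\ U2 (g X Y).

Definition finite_type (U : Type) : Prop := exists l : list U, forall x : U, In x l.

(* At principal ultrafilters generated by a, b, c both Q_<B> and S_[[B]] reduce to
   B a b c: the singletons {a}, {c} are the smallest members of U1, U3, so testing
   Q on them suffices, and they also witness S.  On a finite U every ultrafilter
   contains some singleton (split U = {u1} ∪ ... ∪ {un}), hence is principal. *)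
From Stdlib Require Import List Classical.

Section PrincipalPoints.

Variables (U : Type) (B : U -> U -> U -> Prop).
Variables (U1 U2 U3 : (U -> Prop) -> Prop) (a b c : U).
Hypothesis U1_at_a : forall X, U1 X <-> X a.
Hypothesis U2_at_b : forall X, U2 X <-> X b.
Hypothesis U3_at_c : forall X, U3 X <-> X c.

Lemma Qrel_diaB_at_points : Qrel (diaB B) U1 U2 U3 <-> B a b c.
Proof.
  split.
  - intros HQ.
    assert (Hb : diaB B (fun u => u = a) (fun u => u = c) b).
    { apply U2_at_b, HQ; [apply U1_at_a | apply U3_at_c]; reflexivity. }
    destruct Hb as [x [y [-> [-> Hxby]]]]. exact Hxby.
  - intros Habc X Y HX HY. apply U2_at_b.
    exists a, c. split; [apply U1_at_a, HX|]. split; [apply U3_at_c, HY|]. exact Habc.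
Qed.

Lemma Srel_boxB_at_points : Srel (boxB B) U1 U2 U3 <-> B a b c.
Proof.
  split.
  - intros [X [Y [HX [HY HXY]]]].
    apply U2_at_b in HXY. apply HXY; [apply U1_at_a, HX | apply U3_at_c, HY].
  - intros Habc. exists (fun u => u = a), (fun u => u = c).
    split; [apply U1_at_a; reflexivity|]. split; [apply U3_at_c; reflexivity|].
    apply U2_at_b. intros x y -> ->. exact Habc.
Qed.

End PrincipalPoints.

Lemma principal_Qrel_diaB_iff_Srel_boxB (U : Type) (B : U -> U -> U -> Prop)
    (U1 U2 U3 : (U -> Prop) -> Prop) :
  is_principal U1 -> is_principal U2 -> is_principal U3 ->
  (Qrel (diaB B) U1 U2 U3 <-> Srel (boxB B) U1 U2 U3).
Proof.
  intros [a Ha] [b Hb] [c Hc].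
  rewrite (Qrel_diaB_at_points U B U1 U2 U3 a b c Ha Hb Hc).
  rewrite (Srel_boxB_at_points U B U1 U2 U3 a b c Ha Hb Hc).
  reflexivity.
Qed.

Section UltrafilterSingletons.

Variables (U : Type) (F : (U -> Prop) -> Prop).
Hypothesis F_ultra : ultrafilter F.

Lemma ultrafilter_list_singleton (l : list U) :
  F (fun u => In u l) -> exists x, F (fun u => u = x).
Proof.
  destruct F_ultra as [_ [F_not_empty [F_mono [F_meet F_compl]]]].
  induction l as [|x l IHl]; intros Fl.
  - exfalso. apply F_not_empty, (F_mono _ _ Fl). intros u [].
  - destruct (F_compl (fun u => u = x)) as [Fx | Fnx]; [now exists x|].
    apply IHl, (F_mono _ _ (F_meet _ _ Fl Fnx)).
    intros u [[-> | Hu] Hne]; [contradiction | exact Hu].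
Qed.

Lemma ultrafilter_singleton_principal (x : U) :
  F (fun u => u = x) -> forall X, F X <-> X x.
Proof.
  destruct F_ultra as [_ [F_not_empty [F_mono [F_meet _]]]].
  intros Fx X. split.
  - intros FX. apply NNPP. intros HnX. apply F_not_empty.
    apply (F_mono _ _ (F_meet _ _ FX Fx)). intros u [Hu ->]. contradiction.
  - intros HX. apply (F_mono _ _ Fx). intros u ->. exact HX.
Qed.

Lemma finite_ultrafilter_principal : finite_type U -> is_principal F.
Proof.
  intros [l Hl].
  destruct (ultrafilter_list_singleton l) as [x Fx].
  { destruct F_ultra as [F_full [_ [F_mono _]]]. apply (F_mono _ _ F_full). auto. }
  exists x. exact (ultrafilter_singleton_principal x Fx).
Qed.

End UltrafilterSingletons.

Theorem proposition47 (U : Type) (HU : inhabited U) (B : U -> U -> U -> Prop) :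
  (forall U1 U2 U3 : (U -> Prop) -> Prop,
      ultrafilter U1 -> ultrafilter U2 -> ultrafilter U3 ->
      is_principal U1 -> is_principal U2 -> is_principal U3 ->
      Qrel (diaB B) U1 U2 U3 -> Srel (boxB B) U1 U2 U3) /\
  (finite_type U ->
   forall U1 U2 U3 : (U -> Prop) -> Prop,
      ultrafilter U1 -> ultrafilter U2 -> ultrafilter U3 ->
      (Qrel (diaB B) U1 U2 U3 <-> Srel (boxB B) U1 U2 U3)).
Proof.
  split.
  - intros U1 U2 U3 _ _ _ P1 P2 P3.
    apply (principal_Qrel_diaB_iff_Srel_boxB U B U1 U2 U3 P1 P2 P3).
  - intros Hfin U1 U2 U3 H1 H2 H3.
    apply principal_Qrel_diaB_iff_Srel_boxB;
      apply finite_ultrafilter_principal; assumption.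
Qed.
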